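(* Let $\{S_d\}_{d\ge1}$ and $s$ be as follows: $S_d$ is a nonnegative concave function on density operators of a $d$-level system, vanishing on pure states, with $S_d(\rho_\mathrm{A})=s(\boldsymbol p)$ where $\boldsymbol p$ is the vector of nonzero eigenvalues of $\rho_\mathrm{A}$ in decreasing order, $s$ independent of $d$, $s(1)=0$, and $s(\boldsymbol q)\le s(\boldsymbol p)$ whenever $\boldsymbol q$ majorizes $\boldsymbol p$. Let $E^{cr}$ be defined, for any state $\rho$ of a bipartite system AB, by $$E^{cr}(\rho)=\inf_{\{P_m,|\Psi_m\rangle\}}\sum_m P_m\,S_{d}\big(\operatorname{tr}_\mathrm{B}|\Psi_m\rangle\langle\Psi_m|\big),$$ the infimum being over all ensembles of probabilities $P_m$ and pure states $|\Psi_m\rangle$ with $\sum_mP_m|\Psi_m\rangle\langle\Psi_m|=\rho$, and $d$ the dimension of A. Let A and B have Hilbert space dimensions $d$ and $d'$, let $d^*=\min\{d,d'\}$, and for $y\in[1,d^*]$ define $$f(y)\equiv\inf_{\boldsymbol p\in{\cal F}(y)}s(\boldsymbol p),$$ where ${\cal F}(y)$ is the set of $d^*$-component probability vectors $\boldsymbol p$ (entries in decreasing order, zero entries discarded when evaluating $s$) with $\big(\sum_{i=1}^{d^*}\sqrt{p_i}\big)^2=y$. Then for every state $\rho$ of AB, $$E^{cr}(\rho)\ge co(f)(x),\qquad x\equiv\max\{\|\rho^\Gamma\|,\|{\cal R}(\rho)\|\},$$ where $co(f)$ is the convex hull of $f$.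
   Context: $\|M\|=\operatorname{tr}\sqrt{MM^\dagger}$ is the trace norm. With respect to product bases $\{|i\rangle\}$ of A and $\{|k\rangle\}$ of B, the partial transpose is $\langle i|\langle k|\rho^\Gamma|j\rangle|l\rangle=\langle i|\langle l|\rho|j\rangle|k\rangle$, and the realignment ${\cal R}(\rho)$ is the operator (from the space of B-index pairs to A-index pairs) with matrix elements ${\cal R}(\rho)_{ij,kl}=\langle i|\langle k|\rho|j\rangle|l\rangle$; both trace norms are independent of the chosen product bases. The convex hull $co(f)$ of $f$ on $[1,d^*]$ is the largest convex function on $[1,d^*]$ not exceeding $f$. Majorization is in the usual sense for probability vectors padded with zeros. *)

From HB Require Import structures.
From mathcomp Require Import all_boot all_order all_algebra.
From mathcomp Require Import boolp classical_sets reals.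
From mathcomp Require Import complex.
From mathcomp Require mxtens.

Set Implicit Arguments.
Unset Strict Implicit.
Unset Printing Implicit Defensive.

Import Order.TTheory GRing.Theory Num.Theory.
Local Open Scope ring_scope.
Local Open Scope classical_set_scope.

Section QDefs.
Variable R : realType.
Local Notation C := R[i].

Definition toC (x : R) : C := Complex x 0.

Definition cadj m n (M : 'M[C]_(m, n)) : 'M[C]_(n, m) := (map_mx Num.conj M)^T.

(* the (multiset of) eigenvalues of a square complex matrix: a sequence of the
   roots of its characteristic polynomial, with multiplicity (chosen classically;
   such a sequence exists since C is algebraically closed, and it is unique up
   to permutation) *)
Definition spec n (A : 'M[C]_n) : seq C :=
  xget [::] [set sq : seq C | char_poly A = \prod_(z <- sq) ('X - z%:P)].

(* trace norm  ||M|| = tr sqrt(M M^dagger) = sum of square roots of the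
   (nonnegative) eigenvalues of M M^dagger *)
Definition trnorm m n (M : 'M[C]_(m, n)) : R :=
  \sum_(z <- spec (M *m cadj M)) Num.sqrt (complex.Re z).

Definition hermitian n (A : 'M[C]_n) := cadj A = A.
Definition psd n (A : 'M[C]_n) :=
  hermitian A /\ forall v : 'cV[C]_n, 0 <= (cadj v *m A *m v) ord0 ord0.
Definition density n (A : 'M[C]_n) := psd A /\ \tr A = 1.
Definition unit_vec n (psi : 'cV[C]_n) := cadj psi *m psi = 1.
Definition pure_state n (A : 'M[C]_n) :=
  density A /\ exists psi : 'cV[C]_n, unit_vec psi /\ A = psi *m cadj psi.

Definition eigvec n (A : 'M[C]_n) : seq R :=
  sort (fun x y => y <= x) [seq x <- map (@complex.Re R) (spec A) | 0 < x].

Definition probvec (p : seq R) :=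
  all (fun x => 0 < x) p /\ sorted (fun x y => y <= x) p /\ \sum_(x <- p) x = 1.

(* q majorizes p (vectors padded with zeros via nth 0) *)
Definition majorizes (q p : seq R) :=
  forall k : nat, \sum_(i < k) nth 0 p i <= \sum_(i < k) nth 0 q i.

(* Bipartite system AB = C^d (x) C^d', product basis index (i,k) |-> i*d'+k *)
Definition bidx d d' (i : 'I_d) (k : 'I_d') : 'I_(d * d') :=
  mxtens.mxtens_index (i, k).
Definition unbidx d d' (a : 'I_(d * d')) : 'I_d * 'I_d' :=
  mxtens.mxtens_unindex a.

Definition ptrB d d' (X : 'M[C]_(d * d')) : 'M[C]_d :=
  \matrix_(i, j) \sum_(k < d') X (bidx i k) (bidx j k).

Definition ptransp d d' (X : 'M[C]_(d * d')) : 'M[C]_(d * d') :=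
  \matrix_(a, b) X (bidx (unbidx a).1 (unbidx b).2) (bidx (unbidx b).1 (unbidx a).2).

Definition realign d d' (X : 'M[C]_(d * d')) : 'M[C]_(d * d, d' * d') :=
  \matrix_(a, b) X (bidx (unbidx a).1 (unbidx b).1) (bidx (unbidx a).2 (unbidx b).2).

Definition ensemble_of d d' (rho : 'M[C]_(d * d')) n (P : 'I_n -> R)
    (psi : 'I_n -> 'cV[C]_(d * d')) :=
  (forall m, 0 <= P m) /\ \sum_(m < n) P m = 1 /\ (forall m, unit_vec (psi m)) /\
  \sum_(m < n) toC (P m) *: (psi m *m cadj (psi m)) = rho.

Definition Ecr (S : forall n : nat, 'M[C]_n -> R) d d' (rho : 'M[C]_(d * d')) : R :=
  inf [set e : R | exists n (P : 'I_n -> R) (psi : 'I_n -> 'cV[C]_(d * d')),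
        ensemble_of rho P psi /\
        e = \sum_(m < n) P m * S d (@ptrB d d' (psi m *m cadj (psi m)))].

Definition Fset (ds : nat) (y : R) : set ('I_ds -> R) :=
  [set p | (forall i, 0 <= p i) /\ \sum_(i < ds) p i = 1 /\
           (forall i j : 'I_ds, (i <= j)%N -> p j <= p i) /\
           (\sum_(i < ds) Num.sqrt (p i)) ^+ 2 = y].

Definition fmin (s : seq R -> R) (ds : nat) (y : R) : R :=
  inf [set s [seq x <- [seq p i | i : 'I_ds] | 0 < x] | p in @Fset ds y].

Definition convex_on (a b : R) (g : R -> R) :=
  forall x y t, a <= x <= b -> a <= y <= b -> 0 <= t <= 1 ->
    g (t * x + (1 - t) * y) <= t * g x + (1 - t) * g y.

Definition co_hull (a b : R) (f : R -> R) (x : R) : R :=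
  sup [set g x | g in [set g : R -> R | convex_on a b g /\
                                         forall y, a <= y <= b -> g y <= f y]].

End QDefs.

Arguments ptrB {R} d d' X.
Arguments ptransp {R} d d' X.
Arguments realign {R} d d' X.
Arguments Ecr {R} S d d' rho.
Arguments Fset {R} ds y.

(* Diagonalize the reduced state of a unit vector psi of AB as U diag(lambda) U^*.
   Then psi_{ik} = sum_a U_{ia} sqrt(lambda_a) b_{ak} with |b_a| <= 1, and at most
   min(d, d') of the lambda_a are nonzero.  Hence the partial transpose and the
   realignment of psi psi^* are sums, over pairs (a, b), of sqrt(lambda_a lambda_b)
   times rank-one operators u v^* with |u|, |v| <= 1.  As the trace norm of X is
   Re tr(X W) for a contraction W (polar decomposition), such an operator has trace
   norm at most 1; so both trace norms are at most z := (sum_a sqrt(lambda_a))^2,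
   while S of the reduced state is s(lambda) >= f(z), with 1 <= z <= min(d, d').
   Along a pure-state ensemble {P_m, psi_m} of rho this gives x <= sum_m P_m z_m.
   A convex minorant g of f has g(1) <= f(1) <= 0 and, by Jensen,
   g(sum_m P_m z_m) <= sum_m P_m S(rho_m^A); convexity on the segment from 1 to
   sum_m P_m z_m then bounds g(x) by the same average. *)

From Pilot Require Import Defs.
From HB Require Import structures.
From mathcomp Require Import all_boot all_order all_algebra.
From mathcomp Require Import boolp classical_sets reals.
From mathcomp Require Import complex.
From mathcomp Require Import sesquilinear spectral.
From mathcomp Require Import ring lra.

Set Implicit Arguments.
Unset Strict Implicit.
Unset Printing Implicit Defensive.

Import Order.TTheory GRing.Theory Num.Theory.
Local Open Scope ring_scope.

Section SqrtRatios.
Variable R : realType.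
Implicit Type r : R.

Lemma divr_sqrtr r : 0 <= r -> r / Num.sqrt r = Num.sqrt r.
Proof.
move=> r_ge0; have [->|r_neq0] := eqVneq r 0; first by rewrite mul0r sqrtr0.
have sqrt_neq0 : Num.sqrt r != 0 by rewrite sqrtr_eq0 -ltNge lt_def r_neq0 r_ge0.
by rewrite -{1}(sqr_sqrtr r_ge0) expr2 mulfK.
Qed.

Lemma divr_sqr_sqrtr_le1 r : 0 <= r -> r / Num.sqrt r ^+ 2 <= 1.
Proof.
move=> r_ge0; rewrite sqr_sqrtr //.
by have [->|r_neq0] := eqVneq r 0; rewrite ?mul0r ?divff.
Qed.

End SqrtRatios.

Section ComplexScalars.
Variable R : realType.
Local Notation C := R[i].

Definition sqnormc (z : C) : R := complex.Re z ^+ 2 + complex.Im z ^+ 2.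

Lemma sqnormc_ge0 z : 0 <= sqnormc z.
Proof. by rewrite addr_ge0 ?sqr_ge0. Qed.

Lemma sqnormc_eq0 z : sqnormc z = 0 -> z = 0.
Proof.
case: z => a b /eqP; rewrite /sqnormc /= paddr_eq0 ?sqr_ge0 // !sqrf_eq0.
by case/andP=> /eqP-> /eqP->.
Qed.

Lemma sqnormcM x y : sqnormc (x * y) = sqnormc x * sqnormc y.
Proof. by case: x => a b; case: y => c e; rewrite /sqnormc /=; ring. Qed.

Lemma sqnormcJ x : sqnormc (Num.conj x) = sqnormc x.
Proof. by case: x => a b; rewrite /sqnormc /=; ring. Qed.

Lemma sqnormc_toC (r : R) : sqnormc (toC r) = r ^+ 2.
Proof. by rewrite /sqnormc /=; ring. Qed.

Lemma mulcJ_sqnormc z : z * Num.conj z = toC (sqnormc z).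
Proof.
by case: z => a b; apply/eqP; rewrite eq_complex /sqnormc /=; apply/andP; split;
  apply/eqP; ring.
Qed.

Lemma Re_mulJ_le (a b : C) : complex.Re (Num.conj a * b) <= (sqnormc a + sqnormc b) / 2.
Proof.
case: a => a1 a2; case: b => b1 b2; rewrite /sqnormc /=.
have := sqr_ge0 (a1 - b1); have := sqr_ge0 (a2 - b2); rewrite !expr2; lra.
Qed.

Lemma toC_inj : injective (@toC R).
Proof. by move=> a b []. Qed.

Lemma toCD (a b : R) : toC (a + b) = toC a + toC b.
Proof. by apply/eqP; rewrite eq_complex /= addr0 !eqxx. Qed.

Lemma toCM (a b : R) : toC (a * b) = toC a * toC b.
Proof. by apply/eqP; rewrite eq_complex /= !mulr0 !mul0r subr0 addr0 !eqxx. Qed.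

Lemma toC_sum (I : Type) (r : seq I) (P : pred I) (F : I -> R) :
  toC (\sum_(i <- r | P i) F i) = \sum_(i <- r | P i) toC (F i).
Proof. exact: (big_morph _ toCD (erefl (@toC R 0))). Qed.

Lemma conj_toC (a : R) : Num.conj (toC a) = toC a.
Proof. exact: conjc_real. Qed.

Lemma ler0_toC (a : R) : (0 <= toC a) = (0 <= a).
Proof. exact: ler0c. Qed.

Lemma Re_sum (I : Type) (r : seq I) (P : pred I) (F : I -> C) :
  complex.Re (\sum_(i <- r | P i) F i) = \sum_(i <- r | P i) complex.Re (F i).
Proof. by apply: (big_morph _ _ (erefl (@complex.Re R 0))) => [[a b] [c e]]. Qed.

Lemma Re_toCM (a : R) (z : C) : complex.Re (toC a * z) = a * complex.Re z.
Proof. by case: z => b c; rewrite /= mul0r subr0. Qed.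

Lemma ge0_toC_Re (z : C) : 0 <= z -> z = toC (complex.Re z).
Proof. by case: z => a b /ger0_Im /= ->. Qed.

End ComplexScalars.

Section Adjoint.
Variable R : realType.
Local Notation C := R[i].

Lemma cadjE m n (M : 'M[C]_(m, n)) : cadj M = (M ^t*)%sesqui.
Proof. by rewrite /cadj map_trmx. Qed.

Lemma cadjK m n (M : 'M[C]_(m, n)) : cadj (cadj M) = M.
Proof. by rewrite !cadjE trmxCK. Qed.

Lemma cadjM m n p (A : 'M[C]_(m, n)) (B : 'M[C]_(n, p)) :
  cadj (A *m B) = cadj B *m cadj A.
Proof. by rewrite /cadj map_mxM trmx_mul. Qed.

Definition unitary n (U : 'M[C]_n) := cadj U *m U = 1%:M.

Lemma mulmx_cadj_unitary n (U : 'M[C]_n) : unitary U -> U *m cadj U = 1%:M.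
Proof. exact: mulmx1C. Qed.

Lemma hermitian_spectral n (H : 'M[C]_n) : cadj H = H ->
  exists (U : 'M[C]_n) (D : 'rV[C]_n), unitary U /\ H = U *m diag_mx D *m cadj U.
Proof.
move=> hH.
have /orthomx_spectralP : H \is normalmx by apply/normalmxP; rewrite -cadjE hH.
have := spectral_unitarymx H.
(* Generalizing avoids very slow conversions that unfold [spectralmx]. *)
move: (spectralmx H) (spectral_diag H) => P D Pu HE.
exists (cadj P), D; rewrite /unitary cadjK; split.
  by rewrite cadjE; apply/unitarymxP.
by rewrite HE (invmx_unitary Pu) cadjE.
Qed.

Lemma char_poly_conj n (U V A : 'M[C]_n) : V *m U = 1%:M ->
  char_poly (U *m A *m V) = char_poly A.
Proof.
move=> VU; have UV := mulmx1C VU; rewrite /char_poly.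
have -> : char_poly_mx (U *m A *m V) =
    map_mx polyC U *m char_poly_mx A *m map_mx polyC V.
  rewrite /char_poly_mx mulmxBr mulmxBl !map_mxM; congr (_ - _).
  by rewrite scalar_mxC -mulmxA -map_mxM UV map_mx1 mulmx1.
by rewrite !det_mulmx mulrC mulrA -det_mulmx -map_mxM VU map_mx1 det1 mul1r.
Qed.

Lemma spec_unitary_diag n (U : 'M[C]_n) (D : 'rV[C]_n) : unitary U ->
  perm_eq (spec (U *m diag_mx D *m cadj U)) [seq D 0 i | i <- enum 'I_n].
Proof.
move=> hU; have cpE : char_poly (U *m diag_mx D *m cadj U) =
    \prod_(z <- [seq D 0 i | i <- enum 'I_n]) ('X - z%:P).
  rewrite char_poly_conj // char_poly_trig ?big_map ?big_enum /=; last first.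
    exact/is_diag_mx_is_trig/diag_mx_is_diag.
  by apply: eq_bigr => i _; rewrite mxE eqxx mulr1n.
apply: prod_XsubC_eq; rewrite -cpE.
have ex : exists sq : seq C, char_poly (U *m diag_mx D *m cadj U) =
  \prod_(z <- sq) ('X - z%:P) by exists [seq D 0 i | i <- enum 'I_n].
by have := xgetPex [::] ex; rewrite /spec => <-.
Qed.

Lemma mxtrace_unitary_diag n (U : 'M[C]_n) (D : 'rV[C]_n) : unitary U ->
  \tr (U *m diag_mx D *m cadj U) = \sum_i D 0 i.
Proof. by move=> hU; rewrite mxtrace_mulC mulmxA hU mul1mx mxtrace_diag. Qed.

Lemma unitary_diag_spectral_sum n (U : 'M[C]_n) (D : 'rV[C]_n) :
  U *m diag_mx D *m cadj U = \sum_a D 0 a *: (col a U *m cadj (col a U)).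
Proof.
apply/matrixP => i j; rewrite summxE !mxE; apply: eq_bigr => a _.
rewrite !mxE big_ord1 !mxE (bigD1 a) //= big1 ?addr0.
  by rewrite !mxE eqxx mulr1n mulrCA mulrA.
by move=> b ba; rewrite mxE (negPf ba) mulr0n mulr0.
Qed.

Lemma psd_unitary_diag_ge0 n (U : 'M[C]_n) (D : 'rV[C]_n) a : unitary U ->
  psd (U *m diag_mx D *m cadj U) -> 0 <= D 0 a.
Proof.
move=> hU [_ /(_ (col a U))].
have -> : (cadj (col a U) *m (U *m diag_mx D *m cadj U) *m col a U) 0 0 =
    (cadj U *m (U *m diag_mx D *m cadj U) *m U) a a.
  rewrite !mxE; apply: eq_bigr => k _; rewrite !mxE; congr (_ * _).
  by apply: eq_bigr => l _; rewrite !mxE.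
by rewrite !mulmxA hU mul1mx -mulmxA hU mulmx1 mxE eqxx mulr1n.
Qed.

End Adjoint.

Section SquaredNorms.
Variable R : realType.
Local Notation C := R[i].

Definition sqnormv m (w : 'cV[C]_m) : R := \sum_i sqnormc (w i 0).

Definition sqnormr m n (N : 'M[C]_(m, n)) (i : 'I_m) : R := \sum_j sqnormc (N i j).

Lemma sqnormv_ge0 m (w : 'cV[C]_m) : 0 <= sqnormv w.
Proof. by apply: sumr_ge0 => i _; apply: sqnormc_ge0. Qed.

Lemma sqnormr_ge0 m n (N : 'M[C]_(m, n)) i : 0 <= sqnormr N i.
Proof. by apply: sumr_ge0 => j _; apply: sqnormc_ge0. Qed.

Lemma sqnormr_eq0 m n (N : 'M[C]_(m, n)) i j : sqnormr N i = 0 -> N i j = 0.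
Proof.
by move=> /(psumr_eq0P (fun k _ => sqnormc_ge0 (N i k)))/(_ j isT)/sqnormc_eq0.
Qed.

Lemma sqnormvE m (w : 'cV[C]_m) : (cadj w *m w) 0 0 = toC (sqnormv w).
Proof.
rewrite !mxE toC_sum; apply: eq_bigr => j _.
by rewrite !mxE mulrC mulcJ_sqnormc.
Qed.

Lemma unit_vec_sqnormv m (v : 'cV[C]_m) : sqnormv v = 1 -> unit_vec v.
Proof. by move=> v1; apply/matrixP => i j; rewrite !ord1 sqnormvE v1 mxE. Qed.

Lemma mulmx_cadj_diag m n (N : 'M[C]_(m, n)) i :
  (N *m cadj N) i i = toC (sqnormr N i).
Proof.
by rewrite mxE toC_sum; apply: eq_bigr => j _; rewrite !mxE mulcJ_sqnormc.
Qed.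

Lemma Re_cadj_mul_le m (v w : 'cV[C]_m) :
  complex.Re ((cadj v *m w) 0 0) <= (sqnormv v + sqnormv w) / 2.
Proof.
rewrite !mxE Re_sum -big_split /= mulr_suml; apply: ler_sum => j _.
by rewrite !mxE; apply: Re_mulJ_le.
Qed.

Lemma sqnormv_cadj_unitary m (U : 'M[C]_m) (w : 'cV[C]_m) :
  unitary U -> sqnormv (cadj U *m w) = sqnormv w.
Proof.
move=> /mulmx_cadj_unitary hU; apply: toC_inj.
by rewrite -!sqnormvE cadjM cadjK !mulmxA -(mulmxA _ U) hU mulmx1.
Qed.

Lemma sqnormv_col_unitary m (U : 'M[C]_m) a : unitary U -> sqnormv (col a U) = 1.
Proof.
move=> hU; apply: toC_inj; rewrite -sqnormvE.
transitivity ((cadj U *m U) a a); last by rewrite hU mxE eqxx.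
by rewrite !mxE; apply: eq_bigr => j _; rewrite !mxE.
Qed.

Lemma unitary_row_orthogonalization m n (X : 'M[C]_(m, n)) :
  exists (U : 'M[C]_m) (N : 'M[C]_(m, n)), [/\ unitary U, X = U *m N &
    N *m cadj N = diag_mx (\row_i toC (sqnormr N i))].
Proof.
have [U [D [hU XXE]]] : exists U D, unitary U /\ X *m cadj X = U *m diag_mx D *m cadj U.
  by apply: hermitian_spectral; rewrite cadjM cadjK.
exists U, (cadj U *m X); split => //.
  by rewrite mulmxA mulmx_cadj_unitary // mul1mx.
have NN : cadj U *m X *m cadj (cadj U *m X) = diag_mx D.
  by rewrite cadjM cadjK !mulmxA -(mulmxA _ X) XXE !mulmxA hU mul1mx -mulmxA hU mulmx1.
rewrite [LHS]NN; congr diag_mx; apply/rowP => i.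
by rewrite mxE -mulmx_cadj_diag NN mxE eqxx.
Qed.

Lemma card_nonzero_orthogonal_rows m n (N : 'M[C]_(m, n)) :
  N *m cadj N = diag_mx (\row_i toC (sqnormr N i)) ->
  (#|[set i | sqnormr N i != 0%R]| <= n)%N.
Proof.
move=> NN; set S := [set i | sqnormr N i != 0%R].
pose M := rowsub (@enum_val _ (mem S)) N.
have MM : M *m cadj M = diag_mx (\row_t toC (sqnormr N (enum_val t))).
  apply/matrixP => t t'; transitivity ((N *m cadj N) (enum_val t) (enum_val t')).
    by rewrite !mxE; apply: eq_bigr => j _; rewrite !mxE.
  by rewrite NN !mxE (inj_eq enum_val_inj).
have M_unit : M *m cadj M \in unitmx.
  rewrite MM unitmxE det_diag unitfE; apply/prodf_neq0 => t _.
  by rewrite mxE; have := enum_valP t; rewrite inE; apply: contra => /eqP[->].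
rewrite -(mxrank_unit M_unit).
exact: leq_trans (mxrankM_maxl _ _) (rank_leq_col _).
Qed.

End SquaredNorms.

Section TraceNorm.
Variable R : realType.
Local Notation C := R[i].

Lemma trnorm_orthogonal_rows m n (U : 'M[C]_m) (N : 'M[C]_(m, n)) :
  unitary U -> N *m cadj N = diag_mx (\row_i toC (sqnormr N i)) ->
  trnorm (U *m N) = \sum_i Num.sqrt (sqnormr N i).
Proof.
move=> hU NN; rewrite /trnorm cadjM !mulmxA -(mulmxA U) NN.
rewrite (perm_big _ (spec_unitary_diag _ hU)) big_map big_enum /=.
by apply: eq_bigr => i _; rewrite mxE.
Qed.

Lemma sqnormv_cadj_orthogonal_rows m n (N : 'M[C]_(m, n)) (b : 'cV[C]_m) :
  N *m cadj N = diag_mx (\row_i toC (sqnormr N i)) ->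
  sqnormv (cadj N *m b) = \sum_i sqnormr N i * sqnormc (b i 0).
Proof.
move=> NN; apply: toC_inj; rewrite -sqnormvE cadjM cadjK mulmxA -(mulmxA _ N) NN.
rewrite mul_mx_diag !mxE toC_sum; apply: eq_bigr => i _.
by rewrite !mxE toCM -mulcJ_sqnormc; ring.
Qed.

Lemma trnorm_contraction m n (X : 'M[C]_(m, n)) : exists W : 'M[C]_(n, m),
  (forall a, sqnormv (W *m a) <= sqnormv a) /\ complex.Re (\tr (X *m W)) = trnorm X.
Proof.
have [U [N [hU -> NN]]] := unitary_row_orthogonalization X.
pose k := \row_i toC (Num.sqrt (sqnormr N i))^-1.
exists (cadj N *m diag_mx k *m cadj U); split.
  move=> a; rewrite -(sqnormv_cadj_unitary a hU) -!mulmxA.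
  rewrite sqnormv_cadj_orthogonal_rows // /sqnormv; apply: ler_sum => i _.
  rewrite mul_diag_mx !mxE sqnormcM sqnormc_toC mulrA ler_piMl ?sqnormc_ge0 //.
  by rewrite exprVn divr_sqr_sqrtr_le1 ?sqnormr_ge0.
rewrite (trnorm_orthogonal_rows hU NN) -!mulmxA mxtrace_mulC !mulmxA.
rewrite -(mulmxA _ (cadj U)) hU mulmx1 NN mulmx_diag mxtrace_diag Re_sum.
by apply: eq_bigr => i _; rewrite !mxE /= mulr0 subr0 divr_sqrtr ?sqnormr_ge0.
Qed.

Definition bounded_rank1_sum (K : finType) m n (X : 'M[C]_(m, n)) (w : R) :=
  exists (c : K -> R) (u : K -> 'cV[C]_m) (v : K -> 'cV[C]_n),
  [/\ forall k, 0 <= c k, forall k, sqnormv (u k) <= 1, forall k, sqnormv (v k) <= 1,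
      \sum_k c k = w & X = \sum_k toC (c k) *: (u k *m cadj (v k))].

Lemma trnorm_le_rank1_sum (K : finType) m n (X : 'M[C]_(m, n)) w :
  bounded_rank1_sum K X w -> trnorm X <= w.
Proof.
move=> [c [u [v [c_ge0 u_le1 v_le1 <- ->]]]].
have [W [W_contr <-]] := trnorm_contraction (\sum_k toC (c k) *: (u k *m cadj (v k))).
have -> : \tr ((\sum_k toC (c k) *: (u k *m cadj (v k))) *m W) =
    \sum_k toC (c k) * (cadj (v k) *m (W *m u k)) 0 0.
  rewrite mulmx_suml raddf_sum /=; apply: eq_bigr => k _.
  by rewrite -scalemxAl mxtraceZ -mulmxA mxtrace_mulC -trace_mx11 mulmxA.
rewrite Re_sum; apply: ler_sum => k _; rewrite Re_toCM -[leRHS]mulr1 ler_wpM2l //.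
apply: le_trans (Re_cadj_mul_le _ _) _.
have := W_contr (u k); have := u_le1 k; have := v_le1 k; lra.
Qed.

Lemma bounded_rank1_sum_conv (K : finType) m n p (P : 'I_p -> R)
    (X : 'I_p -> 'M[C]_(m, n)) (w : 'I_p -> R) :
  (forall j, 0 <= P j) -> (forall j, bounded_rank1_sum K (X j) (w j)) ->
  bounded_rank1_sum ('I_p * K)%type (\sum_j toC (P j) *: X j) (\sum_j P j * w j).
Proof.
move=> P_ge0 /choice[c /choice[u /choice[v hX]]].
exists (fun jk => P jk.1 * c jk.1 jk.2), (fun jk => u jk.1 jk.2), (fun jk => v jk.1 jk.2).
split=> [[j k]|[j k]|[j k]| |] /=.
- by case: (hX j) => c_ge0 *; rewrite mulr_ge0.
- by case: (hX j).
- by case: (hX j).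
- rewrite -(pair_bigA _ (fun j k => P j * c j k)); apply: eq_bigr => j _.
  rewrite -mulr_sumr.
  by case: (hX j) => _ _ _ ->.
- rewrite -(pair_bigA _ (fun j k => toC (P j * c j k) *: (u j k *m cadj (v j k)))).
  apply: eq_bigr => j _; case: (hX j) => _ _ _ _ ->.
  by rewrite scaler_sumr; apply: eq_bigr => k _; rewrite scalerA toCM.
Qed.

End TraceNorm.

Section TensorVectors.
Variable R : realType.
Local Notation C := R[i].

Definition tensv p q (x : 'cV[C]_p) (y : 'cV[C]_q) : 'cV[C]_(p * q) :=
  \col_a (x (unbidx a).1 0 * y (unbidx a).2 0).

Definition conjv p (x : 'cV[C]_p) : 'cV[C]_p := map_mx Num.conj x.

Lemma sqnormv_tensv p q (x : 'cV[C]_p) (y : 'cV[C]_q) :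
  sqnormv (tensv x y) = sqnormv x * sqnormv y.
Proof.
by rewrite /sqnormv mxtens.mulr_sum; apply: eq_bigr => a _; rewrite mxE sqnormcM.
Qed.

Lemma sqnormv_conjv p (x : 'cV[C]_p) : sqnormv (conjv x) = sqnormv x.
Proof. by apply: eq_bigr => a _; rewrite mxE sqnormcJ. Qed.

Lemma unbidxK d d' (i : 'I_d) (k : 'I_d') : unbidx (bidx i k) = (i, k).
Proof. exact: mxtens.mxtens_indexK. Qed.

Lemma sum_bidx d d' (F : 'I_(d * d') -> R) : \sum_x F x = \sum_i \sum_k F (bidx i k).
Proof.
rewrite pair_big /= (reindex (fun p : 'I_d * 'I_d' => mxtens.mxtens_index p)) /=.
  by apply: eq_bigr => -[i k] _.
by exists (@mxtens.mxtens_unindex d d') => x _;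
  rewrite (mxtens.mxtens_indexK, mxtens.mxtens_unindexK).
Qed.

End TensorVectors.

Section PureStates.
Variable R : realType.
Local Notation C := R[i].
Variables d d' : nat.
Implicit Types psi : 'cV[C]_(d * d').

Definition amplitude_mx psi : 'M[C]_(d, d') := \matrix_(i, k) psi (bidx i k) 0.

Lemma ptrB_rank1 psi :
  ptrB d d' (psi *m cadj psi) = amplitude_mx psi *m cadj (amplitude_mx psi).
Proof.
apply/matrixP => i j; rewrite !mxE; apply: eq_bigr => k _.
by rewrite !mxE big_ord1 !mxE.
Qed.

Lemma mxtrace_ptrB_rank1 psi : \tr (ptrB d d' (psi *m cadj psi)) = toC (sqnormv psi).
Proof.
rewrite /mxtrace /sqnormv sum_bidx toC_sum; apply: eq_bigr => i _.
rewrite !mxE toC_sum; apply: eq_bigr => k _.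
by rewrite !mxE big_ord1 !mxE mulcJ_sqnormc.
Qed.

Lemma density_ptrB_rank1 psi : unit_vec psi -> density (ptrB d d' (psi *m cadj psi)).
Proof.
move=> psi1; split; last first.
  by rewrite mxtrace_ptrB_rank1 -sqnormvE psi1 mxE.
rewrite ptrB_rank1; split; first by rewrite /Defs.hermitian cadjM cadjK.
move=> v; set P := amplitude_mx psi.
have -> : cadj v *m (P *m cadj P) *m v = cadj (cadj P *m v) *m (cadj P *m v).
  by rewrite cadjM cadjK !mulmxA.
by rewrite sqnormvE ler0_toC sqnormv_ge0.
Qed.

Lemma ptransp_sum n (c : 'I_n -> C) (M : 'I_n -> 'M[C]_(d * d')) :
  ptransp d d' (\sum_m c m *: M m) = \sum_m c m *: ptransp d d' (M m).
Proof.
by apply/matrixP => x y; rewrite !mxE !summxE; apply: eq_bigr => m _; rewrite !mxE.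
Qed.

Lemma realign_sum n (c : 'I_n -> C) (M : 'I_n -> 'M[C]_(d * d')) :
  realign d d' (\sum_m c m *: M m) = \sum_m c m *: realign d d' (M m).
Proof.
by apply/matrixP => x y; rewrite !mxE !summxE; apply: eq_bigr => m _; rewrite !mxE.
Qed.

(* Unlike in a genuine Schmidt decomposition, the vectors [be a] need not be
   orthonormal: norm at most one is all the trace-norm bounds use. *)
Definition schmidt_form psi (U : 'M[C]_d) (sq : 'I_d -> R) (be : 'I_d -> 'cV[C]_d') :=
  [/\ unitary U, forall a, 0 <= sq a, forall a, sqnormv (be a) <= 1 &
      forall i k, psi (bidx i k) 0 = \sum_a U i a * toC (sq a) * be a k 0].

Lemma schmidt_decomposition psi :
  exists (U : 'M[C]_d) (sq : 'I_d -> R) (be : 'I_d -> 'cV[C]_d'),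
  [/\ schmidt_form psi U sq be, (#|[set a | sq a != 0%R]| <= d')%N &
      ptrB d d' (psi *m cadj psi) = U *m diag_mx (\row_a toC (sq a ^+ 2)) *m cadj U].
Proof.
have [U [N [hU PE NN]]] := unitary_row_orthogonalization (amplitude_mx psi).
pose sq a := Num.sqrt (sqnormr N a).
have sq2 a : sq a ^+ 2 = sqnormr N a by rewrite sqr_sqrtr ?sqnormr_ge0.
have sq_eq0 a : (sq a == 0) = (sqnormr N a == 0).
  by rewrite sqrtr_eq0 eq_le sqnormr_ge0 andbT.
pose be a : 'cV[C]_d' := \col_k (N a k * toC (sq a)^-1).
exists U, sq, be; split.
- split=> // [a|a|i k]; first exact: sqrtr_ge0.
    rewrite /sqnormv; under eq_bigr => k _ do rewrite mxE sqnormcM sqnormc_toC.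
    by rewrite -mulr_suml exprVn divr_sqr_sqrtr_le1 ?sqnormr_ge0.
  have -> : psi (bidx i k) 0 = amplitude_mx psi i k by rewrite mxE.
  rewrite PE mxE; apply: eq_bigr => a _.
  rewrite mxE -mulrA; congr (_ * _); have [ra0|ra0] := eqVneq (sqnormr N a) 0.
    by rewrite sqnormr_eq0 // [sq a]/sq ra0 sqrtr0 mul0r.
  by rewrite mulrCA -toCM mulfV ?mulr1 // sq_eq0.
- apply: leq_trans (card_nonzero_orthogonal_rows NN).
  by apply/eq_leq/eq_card => a; rewrite !inE sq_eq0.
- rewrite ptrB_rank1 PE cadjM !mulmxA -(mulmxA U) NN.
  by congr (_ *m diag_mx _ *m _); apply/rowP => a; rewrite !mxE sq2.
Qed.

Lemma sqr_sum_pair (sq : 'I_d -> R) :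
  (\sum_a sq a) ^+ 2 = \sum_(p : 'I_d * 'I_d) sq p.1 * sq p.2.
Proof.
by rewrite expr2 mulr_suml; under eq_bigr => a _ do rewrite mulr_sumr; rewrite pair_big.
Qed.

Lemma ptransp_schmidt psi U sq be : schmidt_form psi U sq be ->
  bounded_rank1_sum ('I_d * 'I_d)%type (ptransp d d' (psi *m cadj psi))
    ((\sum_a sq a) ^+ 2).
Proof.
case=> hU sq_ge0 be_le1 hpsi.
exists (fun p => sq p.1 * sq p.2), (fun p => tensv (col p.1 U) (conjv (be p.2))),
  (fun p => tensv (col p.2 U) (conjv (be p.1))).
split=> [p|p|p||]; rewrite ?sqnormv_tensv ?sqnormv_conjv ?sqnormv_col_unitary ?mul1r //.
- exact: mulr_ge0.
- by rewrite sqr_sum_pair.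
apply/matrixP => x y.
rewrite -[x]mxtens.mxtens_unindexK -[y]mxtens.mxtens_unindexK.
case: (mxtens.mxtens_unindex x) => i k; case: (mxtens.mxtens_unindex y) => j l.
rewrite summxE !mxE !unbidxK /= big_ord1 !mxE !hpsi.
under [RHS]eq_bigr => p _ do rewrite !mxE big_ord1 !mxE !unbidxK /=.
rewrite rmorph_sum mulr_suml.
under [LHS]eq_bigr => a _ do rewrite mulr_sumr.
rewrite pair_big /=; apply: eq_bigr => -[a b] _ /=.
rewrite !rmorphM /= conjCK conj_toC toCM; ring.
Qed.

Lemma realign_schmidt psi U sq be : schmidt_form psi U sq be ->
  bounded_rank1_sum ('I_d * 'I_d)%type (realign d d' (psi *m cadj psi))
    ((\sum_a sq a) ^+ 2).
Proof.
case=> hU sq_ge0 be_le1 hpsi.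
exists (fun p => sq p.1 * sq p.2), (fun p => tensv (col p.1 U) (conjv (col p.2 U))),
  (fun p => tensv (conjv (be p.1)) (be p.2)).
split=> [p|p|p||]; rewrite ?sqnormv_tensv ?sqnormv_conjv ?sqnormv_col_unitary ?mul1r //.
- exact: mulr_ge0.
- by apply: mulr_ile1; rewrite ?sqnormv_ge0.
- by rewrite sqr_sum_pair.
apply/matrixP => x y.
rewrite -[x]mxtens.mxtens_unindexK -[y]mxtens.mxtens_unindexK.
case: (mxtens.mxtens_unindex x) => i j; case: (mxtens.mxtens_unindex y) => k l.
rewrite summxE !mxE !unbidxK /= big_ord1 !mxE !hpsi.
under [RHS]eq_bigr => p _ do rewrite !mxE big_ord1 !mxE !unbidxK /=.
rewrite rmorph_sum mulr_suml.
under [LHS]eq_bigr => a _ do rewrite mulr_sumr.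
rewrite pair_big /=; apply: eq_bigr => -[a b] _ /=.
rewrite !rmorphM /= !conjCK conj_toC toCM; ring.
Qed.

End PureStates.

Section ProbabilityVectors.
Variable R : realType.
Implicit Types (p e : seq R).

Lemma nth_ge0 e i : all (fun x => 0 < x) e -> 0 <= nth 0 e i.
Proof.
move=> /allP e_gt0; have [ie|ie] := ltnP i (size e); last by rewrite nth_default.
exact/ltW/e_gt0/mem_nth.
Qed.

Lemma sum_nth_ord (G : R -> R) n e : G 0 = 0 -> (size e <= n)%N ->
  \sum_(i < n) G (nth 0 e i) = \sum_(x <- e) G x.
Proof.
move=> G0 hs; rewrite (big_nth 0) -(big_mkord xpredT (fun i => G (nth 0 e i))).
rewrite (big_cat_nat (leq0n _) hs) /= [X in _ + X]big1_seq ?addr0 // => i.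
by rewrite mem_index_iota => /andP[_ /andP[hi _]]; rewrite nth_default.
Qed.

Lemma probvec1 : probvec [:: 1 : R].
Proof. by split; rewrite /= ?ltr01 // big_seq1. Qed.

Lemma majorizes1 p : probvec p -> majorizes [:: 1] p.
Proof.
case=> p_gt0 [_ p1] [|k]; first by rewrite !big_ord0.
rewrite [leRHS]big_ord_recl [X in _ + X]big1 /= ?addr0 => [|i _]; last first.
  by rewrite nth_default.
rewrite -p1 -(sum_nth_ord (G := id) (n := maxn k.+1 (size p))) ?leq_maxr //.
rewrite -!(big_mkord xpredT (fun i => nth 0 p i)).
rewrite (big_cat_nat (leq0n _) (leq_maxl k.+1 (size p))) /= lerDl.
by apply: sumr_ge0 => i _; apply: nth_ge0.
Qed.

Lemma sorted_Fset ds y (p : 'I_ds -> R) : Fset ds y p ->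
  sorted (fun x y => y <= x) [seq p i | i : 'I_ds].
Proof.
case=> _ [_ [p_mono _]]; rewrite sorted_map.
have := iota_sorted 0 ds; rewrite -val_enum_ord sorted_map.
by apply: sub_sorted => i j /= /p_mono.
Qed.

Lemma probvec_Fset ds y (p : 'I_ds -> R) : Fset ds y p ->
  probvec [seq x <- [seq p i | i : 'I_ds] | 0 < x].
Proof.
move=> pF; have [p_ge0 [p1 _]] := pF; split; first exact: filter_all.
split; first exact/sorted_filter/sorted_Fset/pF/ge_trans.
rewrite big_filter big_map big_enum_cond /= -p1 [RHS](bigID (fun i => 0 < p i)) /=.
rewrite [X in _ = _ + X]big1 ?addr0 // => i.
by rewrite -leNgt => h; apply/eqP; rewrite eq_le h p_ge0.
Qed.

Lemma Fset_nth ds e : probvec e -> (size e <= ds)%N ->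
  Fset ds ((\sum_(x <- e) Num.sqrt x) ^+ 2) (fun i : 'I_ds => nth 0 e i) /\
  [seq x <- [seq nth 0 e i | i : 'I_ds] | 0 < x] = e.
Proof.
move=> [e_gt0 [e_sorted e1]] hs; split.
  split=> [i|]; first exact: nth_ge0.
  split; first by rewrite (sum_nth_ord (G := id)).
  split; last by rewrite (sum_nth_ord (G := Num.sqrt)) // sqrtr0.
  move=> i j hij; have [je|je] := ltnP j (size e); last by rewrite nth_default ?nth_ge0.
  apply: (sorted_leq_nth ge_trans (@lexx _ R)) => //; rewrite ?inE //.
  exact: leq_ltn_trans hij je.
have -> : [seq nth 0 e i | i : 'I_ds] = [seq nth 0 e k | k <- iota 0 ds].
  by rewrite -val_enum_ord -map_comp.
rewrite -(subnKC hs) iotaD map_cat filter_cat -/(mkseq _ _) mkseq_nth.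
rewrite (all_filterP e_gt0) -[RHS]cats0; congr (_ ++ _).
rewrite (@eq_in_filter _ _ pred0) ?filter_pred0 // => x /mapP[k].
by rewrite mem_iota => /andP[hk _] ->; rewrite nth_default ?ltxx.
Qed.

Lemma sqr_sum_ge n (a : 'I_n -> R) : (forall i, 0 <= a i) ->
  \sum_i a i ^+ 2 <= (\sum_i a i) ^+ 2.
Proof.
move=> a_ge0; rewrite expr2 mulr_suml; apply: ler_sum => i _.
rewrite mulr_sumr (bigD1 i) //= expr2 lerDl.
by apply: sumr_ge0 => j _; rewrite mulr_ge0.
Qed.

Lemma sqr_sum_le n (a : 'I_n -> R) : (\sum_i a i) ^+ 2 <= n%:R * \sum_i a i ^+ 2.
Proof.
case: n a => [|n] a; first by rewrite !big_ord0 expr0n mul0r.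
set S := \sum_i a i; set Q := \sum_i a i ^+ 2.
have : 0 <= \sum_i (n.+1%:R * a i - S) ^+ 2 by apply: sumr_ge0 => i _; apply: sqr_ge0.
have -> : \sum_i (n.+1%:R * a i - S) ^+ 2 = n.+1%:R * (n.+1%:R * Q - S ^+ 2).
  under eq_bigr => i _ do rewrite sqrrB exprMn.
  rewrite !big_split sumrN sumrMnl sumr_const card_ord /= -mulr_sumr -/Q.
  rewrite -mulr_suml -mulr_sumr -/S; ring.
by rewrite pmulr_rge0 ?ltr0n // subr_ge0.
Qed.

Lemma Fset_bounds ds y (p : 'I_ds -> R) : Fset ds y p -> 1 <= y <= ds%:R.
Proof.
case=> p_ge0 [p1 [_ <-]].
have sq1 : \sum_i Num.sqrt (p i) ^+ 2 = 1.
  by rewrite -p1; apply: eq_bigr => i _; rewrite sqr_sqrtr.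
apply/andP; split; first by rewrite -sq1 sqr_sum_ge // => i; apply: sqrtr_ge0.
by have := sqr_sum_le (fun i => Num.sqrt (p i)); rewrite sq1 mulr1.
Qed.

End ProbabilityVectors.

Lemma inf_ge0 (R : realType) (E : set R) : (forall y, E y -> 0 <= y) -> 0 <= inf E.
Proof.
move=> E_ge0; have [->|/set0P E_neq0] := eqVneq E set0; first by rewrite inf0.
exact: lb_le_inf.
Qed.

Section MinimalEntropy.
Variable R : realType.
Variable s : seq R -> R.
Hypothesis s_one : s [:: 1] = 0.
Hypothesis s_maj :
  forall p q : seq R, probvec p -> probvec q -> majorizes q p -> s q <= s p.

Lemma s_ge0 p : probvec p -> 0 <= s p.
Proof. by move=> pP; rewrite -s_one s_maj //; [exact: probvec1 | exact: majorizes1]. Qed.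

Lemma fmin_ge0 ds y : 0 <= fmin s ds y.
Proof. by apply: inf_ge0 => _ [p /probvec_Fset/s_ge0 ? <-]. Qed.

Lemma fmin_le ds e : probvec e -> (size e <= ds)%N ->
  fmin s ds ((\sum_(x <- e) Num.sqrt x) ^+ 2) <= s e.
Proof.
move=> eP e_ds; have [eF e_filter] := Fset_nth eP e_ds.
apply: ge_inf; last by exists (fun i : 'I_ds => nth 0 e i); rewrite ?e_filter.
by exists 0 => _ [p /probvec_Fset/s_ge0 ? <-].
Qed.

Lemma fmin1_le0 ds : (0 < ds)%N -> fmin s ds 1 <= 0.
Proof.
move=> ds_gt0; rewrite -s_one.
by have := @fmin_le ds [:: 1] (probvec1 R) ds_gt0; rewrite big_seq1 sqrtr1 expr1n.
Qed.

End MinimalEntropy.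

Section Spectrum.
Variable R : realType.
Local Notation C := R[i].

Lemma eigvec_unitary_diag n (U : 'M[C]_n) (t : 'I_n -> R) : unitary U ->
  perm_eq (eigvec (U *m diag_mx (\row_a toC (t a)) *m cadj U))
          [seq x <- [seq t a | a <- enum 'I_n] | 0 < x].
Proof.
move=> hU; rewrite perm_sort; apply: perm_filter.
have := perm_map (@complex.Re R) (spec_unitary_diag (\row_a toC (t a)) hU).
by rewrite -map_comp; under [X in perm_eq _ X]eq_map => a do rewrite /= mxE.
Qed.

Lemma probvec_perm_sqr n (sq : 'I_n -> R) e : (forall a, 0 <= sq a) ->
  \sum_a sq a ^+ 2 = 1 -> perm_eq e [seq x <- [seq sq a ^+ 2 | a <- enum 'I_n] | 0 < x] ->
  sorted (fun x y => y <= x) e ->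
  [/\ probvec e, (size e <= #|[set a | sq a != 0%R]|)%N &
      \sum_(x <- e) Num.sqrt x = \sum_a sq a].
Proof.
move=> sq_ge0 sq1 e_perm e_sorted.
have sq_gt0 a : (0 < sq a ^+ 2) = (sq a != 0) by rewrite lt_def sqr_ge0 andbT sqrf_eq0.
have sum_e (G : R -> R) : G 0 = 0 -> \sum_(x <- e) G x = \sum_a G (sq a ^+ 2).
  move=> G0; rewrite (perm_big _ e_perm) big_filter big_map big_enum_cond /=.
  rewrite [RHS](bigID (fun a => 0 < sq a ^+ 2)) /= [X in _ = _ + X]big1 ?addr0 //.
  by move=> a; rewrite sq_gt0 negbK => /eqP->; rewrite expr0n.
split.
- split; first by rewrite (perm_all _ e_perm) filter_all.
  by split=> //; rewrite (sum_e id).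
- rewrite (perm_size e_perm) size_filter count_map -sum1_count big_enum_cond /=.
  by rewrite sum1_card cardsE; apply/eq_leq/eq_card => a; exact: sq_gt0.
- rewrite (sum_e _ (sqrtr0 R)); apply: eq_bigr => a _.
  by rewrite sqrtr_sqr ger0_norm.
Qed.

End Spectrum.

Section ConvexHull.
Variable R : realType.
Implicit Types (a b e x : R) (g F : R -> R).

Lemma wmean_in_itv a b n (P z : 'I_n -> R) :
  (forall m, 0 <= P m) -> \sum_m P m = 1 -> (forall m, a <= z m <= b) ->
  a <= \sum_m P m * z m <= b.
Proof.
move=> P_ge0 P1 z_ab; rewrite -[a]mul1r -[b]mul1r -P1 !mulr_suml.
by apply/andP; split; apply: ler_sum => m _; rewrite ler_wpM2l //; case/andP: (z_ab m).
Qed.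

Lemma convex_on_jensen a b g n (P z : 'I_n -> R) :
  convex_on a b g -> (forall m, 0 <= P m) -> \sum_m P m = 1 ->
  (forall m, a <= z m <= b) -> g (\sum_m P m * z m) <= \sum_m P m * g (z m).
Proof.
move=> g_cvx; elim: n P z => [|n IH] P z P_ge0 P1 z_ab.
  by move: P1; rewrite big_ord0 => /eqP; rewrite eq_sym oner_eq0.
move: P1; rewrite !big_ord_recr /=.
set t := P ord_max; set S := \sum_(i < n) P (widen_ord _ i) => P1.
have S_ge0 : 0 <= S by apply: sumr_ge0 => i _; apply: P_ge0.
have [S0|S_neq0] := eqVneq S 0.
  have P0 i : P (widen_ord (leqnSn n) i) = 0.
    by apply: (psumr_eq0P _ S0) => // j _; apply: P_ge0.
  have -> : t = 1 by rewrite -P1 S0 add0r.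
  by rewrite !big1 ?add0r ?mul1r //; move=> i _; rewrite P0 mul0r.
pose P' i := P (widen_ord (leqnSn n) i) / S.
have rescale (F : 'I_n -> R) :
    \sum_(i < n) P (widen_ord (leqnSn n) i) * F i = S * \sum_i P' i * F i.
  by rewrite mulr_sumr; apply: eq_bigr => i _; rewrite mulrA mulrCA divff ?mulr1.
have P'1 : \sum_i P' i = 1 by rewrite -mulr_suml divff.
have P'_ge0 i : 0 <= P' i by rewrite divr_ge0.
have t01 : 0 <= t <= 1 by rewrite P_ge0 -P1 lerDr.
have S_def : S = 1 - t by rewrite -P1 addrK.
rewrite !rescale S_def addrC [X in _ <= X]addrC.
apply: le_trans (g_cvx _ _ _ (z_ab _) (wmean_in_itv P'_ge0 P'1 (fun i => z_ab _)) t01) _.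
by rewrite lerD2l ler_wpM2l ?subr_ge0 //; [case/andP: t01 | apply: IH].
Qed.

Lemma convex_on_le_endpoints a b g x w e : convex_on a b g ->
  a <= x <= w -> w <= b -> g a <= e -> g w <= e -> g x <= e.
Proof.
move=> g_cvx /andP[ax xw] wb ga gw; have aw := le_trans ax xw.
have [wa|aw'] := eqVneq w a.
  by have -> : x = a by apply/eqP; rewrite eq_le ax -wa xw.
have wa_gt0 : 0 < w - a by rewrite subr_gt0 lt_def aw' aw.
pose t := (x - a) / (w - a).
have t01 : 0 <= t <= 1.
  by rewrite divr_ge0 ?ler_pdivrMr // ?mul1r ?lerB ?subr_ge0 // ltW.
have -> : x = t * w + (1 - t) * a by rewrite /t; field; rewrite gt_eqF.
have aa_b : a <= a <= b by rewrite lexx (le_trans aw wb).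
apply: le_trans (g_cvx w a t _ aa_b t01) _; first by rewrite aw wb.
case/andP: t01 => t0 t1; have := ler_wpM2l t0 gw.
have t1' : 0 <= 1 - t by rewrite subr_ge0.
have := ler_wpM2l t1' ga; lra.
Qed.

(* For [x < a] the convex minorants [y |-> c * (a - y)] make the set whose
   supremum defines [co_hull] unbounded, and [sup] of an unbounded set is [0]. *)
Lemma co_hull_out a b F x : (forall y, a <= y <= b -> 0 <= F y) -> x < a ->
  co_hull a b F x = 0.
Proof.
move=> F_ge0 xa; rewrite /co_hull sup_out // => -[_ [M M_ub]].
pose c := Num.max 0 (M + 1) / (a - x).
have c_ge0 : 0 <= c by rewrite divr_ge0 ?le_max ?lexx // subr_ge0 ltW.
have : c * (a - x) <= M.
  apply: M_ub; exists (fun y => c * (a - y)) => //; split.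
    by move=> y1 y2 t _ _ _; rewrite le_eqVlt; apply/orP; left; apply/eqP; ring.
  move=> y /andP[ay yb]; apply: le_trans (F_ge0 y _); last by rewrite ay yb.
  by rewrite mulr_ge0_le0 // subr_le0.
rewrite /c divfK ?subr_eq0 ?gt_eqF //.
have : M + 1 <= Num.max 0 (M + 1) by rewrite le_max lexx orbT.
lra.
Qed.

Lemma co_hull_le a b F x e n (P z : 'I_n -> R) :
  (forall y, a <= y <= b -> 0 <= F y) -> F a <= 0 -> 0 <= e ->
  (forall m, 0 <= P m) -> \sum_m P m = 1 -> (forall m, a <= z m <= b) ->
  x <= \sum_m P m * z m -> \sum_m P m * F (z m) <= e -> co_hull a b F x <= e.
Proof.
move=> F_ge0 Fa e_ge0 P_ge0 P1 z_ab x_le Fz_le.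
have [xa|ax] := ltP x a; first by rewrite co_hull_out.
have /andP[aw wb] := wmean_in_itv P_ge0 P1 z_ab.
apply: ge_sup.
  exists 0, (fun=> 0) => //; split; first by move=> *; rewrite !mulr0 addr0.
  by move=> y /F_ge0.
move=> _ [g [g_cvx g_le] <-].
apply: (convex_on_le_endpoints g_cvx _ wb); first by rewrite ax x_le.
  by apply: le_trans (g_le a _) (le_trans Fa e_ge0); rewrite lexx (le_trans aw wb).
apply: le_trans (convex_on_jensen g_cvx P_ge0 P1 z_ab) (le_trans _ Fz_le).
by apply: ler_sum => m _; rewrite ler_wpM2l ?g_le.
Qed.

End ConvexHull.

Lemma density_ensemble (R : realType) d d' (rho : 'M[R[i]]_(d * d')) : density rho ->
  exists n (P : 'I_n -> R) (psi : 'I_n -> 'cV[R[i]]_(d * d')), ensemble_of rho P psi.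
Proof.
move=> [rho_psd rho_tr]; have [U [D [hU rhoE]]] := hermitian_spectral rho_psd.1.
rewrite rhoE in rho_psd rho_tr.
have D_ge0 a : 0 <= D 0 a := psd_unitary_diag_ge0 a hU rho_psd.
have DE a : D 0 a = toC (complex.Re (D 0 a)) := ge0_toC_Re (D_ge0 a).
exists (d * d')%N, (fun a => complex.Re (D 0 a)), (fun a => col a U); split.
  by move=> a; rewrite -ler0_toC -DE.
split.
  apply: toC_inj; rewrite toC_sum -[toC 1]/(1 : R[i]) -rho_tr mxtrace_unitary_diag //.
  by apply: eq_bigr => a _; rewrite -DE.
split; first by move=> a; apply/unit_vec_sqnormv/sqnormv_col_unitary.
by rewrite rhoE unitary_diag_spectral_sum; apply: eq_bigr => a _; rewrite -DE.
Qed.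

Section PureStateBound.
Variable R : realType.
Local Notation C := R[i].
Variable s : seq R -> R.
Hypothesis s_one : s [:: 1] = 0.
Hypothesis s_maj :
  forall p q : seq R, probvec p -> probvec q -> majorizes q p -> s q <= s p.
Variables d d' : nat.

Lemma pure_state_bound (S : forall n : nat, 'M[C]_n -> R)
    (S_spec : forall n (rho : 'M[C]_n), density rho -> S n rho = s (eigvec rho))
    (psi : 'cV[C]_(d * d')) : unit_vec psi ->
  exists z, [/\ 1 <= z <= (minn d d')%:R,
    fmin s (minn d d') z <= S d (ptrB d d' (psi *m cadj psi)),
    bounded_rank1_sum ('I_d * 'I_d)%type (ptransp d d' (psi *m cadj psi)) z &
    bounded_rank1_sum ('I_d * 'I_d)%type (realign d d' (psi *m cadj psi)) z].
Proof.
move=> psi1; have [U [sq [be [schmidt card_le ptrE]]]] := schmidt_decomposition psi.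
have [hU sq_ge0 _ _] := schmidt.
have sq1 : \sum_a sq a ^+ 2 = 1.
  have := mxtrace_ptrB_rank1 psi.
  rewrite ptrE mxtrace_unitary_diag // -sqnormvE psi1 mxE eqxx mulr1n => trE.
  apply: toC_inj; rewrite toC_sum -[toC 1]/(1 : C) -trE.
  by apply: eq_bigr => a _; rewrite mxE.
have [eP e_size e_sqrt] := probvec_perm_sqr sq_ge0 sq1
  (eigvec_unitary_diag (fun a => sq a ^+ 2) hU) (sort_sorted ge_total _).
rewrite -ptrE in eP e_size e_sqrt.
have e_ds : (size (eigvec (ptrB d d' (psi *m cadj psi))) <= minn d d')%N.
  rewrite leq_min (leq_trans e_size card_le) andbT.
  by apply: leq_trans e_size (leq_trans (max_card _) _); rewrite card_ord.
exists ((\sum_a sq a) ^+ 2); split.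
- by rewrite -e_sqrt; apply: Fset_bounds (Fset_nth eP e_ds).1.
- rewrite -e_sqrt S_spec; last exact: density_ptrB_rank1.
  exact: fmin_le.
- exact: ptransp_schmidt schmidt.
- exact: realign_schmidt schmidt.
Qed.

End PureStateBound.

Theorem proposition4 (R : realType)
  (S : forall n : nat, 'M[R[i]]_n -> R) (s : seq R -> R)
  (S_nonneg : forall n (rho : 'M[R[i]]_n), density rho -> 0 <= S n rho)
  (S_concave : forall n (rho sigma : 'M[R[i]]_n) (t : R),
      density rho -> density sigma -> 0 <= t <= 1 ->
      t * S n rho + (1 - t) * S n sigma
        <= S n (toC t *: rho + toC (1 - t) *: sigma))
  (S_pure : forall n (rho : 'M[R[i]]_n), pure_state rho -> S n rho = 0)
  (S_spec : forall n (rho : 'M[R[i]]_n), density rho -> S n rho = s (eigvec rho))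
  (s_one : s [:: 1] = 0)
  (s_maj : forall p q : seq R, probvec p -> probvec q -> majorizes q p -> s q <= s p)
  (d d' : nat) (hd : (0 < d)%N) (hd' : (0 < d')%N)
  (rho : 'M[R[i]]_(d * d')) (hrho : density rho) :
  co_hull 1 (minn d d')%:R (fmin s (minn d d'))
      (Num.max (trnorm (ptransp d d' rho)) (trnorm (realign d d' rho)))
    <= Ecr S d d' rho.
Proof.
have ds_gt0 : (0 < minn d d')%N by rewrite leq_min hd hd'.
apply: lb_le_inf.
  have [n [P [psi ens]]] := density_ensemble hrho.
  by eexists; exists n, P, psi; split; first exact: ens.
move=> _ [n [P [psi [[P_ge0 [P1 [psi1 <-]]] ->]]]].
have /choice[z hz] := fun m => pure_state_bound s_one s_maj S_spec (psi1 m).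
have Fz_le m : fmin s (minn d d') (z m) <= S d (ptrB d d' (psi m *m cadj (psi m))).
  by case: (hz m).
apply: (co_hull_le (P := P) (z := z)) => //.
- by move=> y _; apply: fmin_ge0.
- exact: fmin1_le0.
- apply: sumr_ge0 => m _; rewrite mulr_ge0 //.
  exact: le_trans (fmin_ge0 s_one s_maj _ _) (Fz_le m).
- by move=> m; case: (hz m).
- rewrite ge_max ptransp_sum realign_sum.
  by apply/andP; split;
    apply: (trnorm_le_rank1_sum (K := ('I_n * ('I_d * 'I_d))%type));
    apply: bounded_rank1_sum_conv => // m; case: (hz m).
- by apply: ler_sum => m _; rewrite ler_wpM2l.
Qed.
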